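(* Let $\alpha\in(0,1)$ and $\gamma_n=\alpha n$ for each $n$, and let $\lambda_n$ satisfy $\lambda_n=o(n)$ and $\lambda_n=\omega(1)$. Let $K:\mathbb{N}_0\to\mathbb{N}_0$, $n\mapsto K_n$, be a scaling and let \[ r_4(\alpha,\lambda_n) = 1+\frac{\log\!\left(1+\frac{n\alpha}{\lambda_n}\right)+\alpha+\log(1-\alpha)}{\frac{1-\alpha}{2}-\log\!\left(\frac{1+\alpha}{2}\right)}. \] If $K_n > r_4(\alpha,\lambda_n)$ for all $n$, then \[ \lim_{n\to\infty} \mathbb{P}\big[\,|C_{max}(n,K_n,\gamma_n)| > n-\gamma_n-\lambda_n\,\big] = 1. \]
   Context: Random K-out graph $\mathbb{H}(n;K_n)$: on vertex set $V=\{v_1,\dots,v_n\}$ with labels $\mathcal{N}=\{1,\dots,n\}$, each node $v_i$ independently selects a set $\Gamma_{n,i}\subseteq \mathcal{N}\setminus\{i\}$ of $K_n$ distinct labels uniformly at random (the sets $\Gamma_{n,1},\dots,\Gamma_{n,n}$ are mutually independent). Distinct nodes $v_i,v_j$ are adjacent if $j\in\Gamma_{n,i}$ or $i\in\Gamma_{n,j}$ (undirected graph). The graph $\mathbb{H}(n;K_n,\gamma_n)$ is obtained by choosing a set $D\subset V$ of $\gamma_n$ nodes uniformly at random and deleting them: it has vertex set $R=V\setminus D$, and two distinct vertices of $R$ are adjacent iff they are adjacent in $\mathbb{H}(n;K_n)$. $C_{max}(n,K_n,\gamma_n)$ denotes the vertex set of a largest connected component of $\mathbb{H}(n;K_n,\gamma_n)$.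 $\log$ is the natural logarithm; Landau notation is as $n\to\infty$. *)

From HB Require Import structures.
From mathcomp Require Import all_boot all_order all_algebra.
From mathcomp Require Import all_classical all_reals all_analysis.
Set Implicit Arguments. Unset Strict Implicit. Unset Printing Implicit Defensive.
Import Order.TTheory GRing.Theory Num.Theory.
Local Open Scope ring_scope.

(* An outcome of the experiment defining H(n;K,gamma):
   - Gam : for every node i (labels 'I_n), the set Gamma_{n,i} it selects;
   - D   : the set of deleted nodes. *)
Definition outcome (n : nat) : finType :=
  ({ffun 'I_n -> {set 'I_n}} * {set 'I_n})%type.

(* The uniform distribution
   on admissible outcomes is exactly the law of independent uniform choices
   of Gamma_1,...,Gamma_n and of D. *)
Definition admissible (n K gamma : nat) (w : outcome n) : bool :=
  [forall i : 'I_n, (#|w.1 i| == K) && (i \notin w.1 i)] && (#|w.2| == gamma).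

Definition kout_adj (n : nat) (w : outcome n) : rel 'I_n :=
  fun i j => (i != j) && ((j \in w.1 i) || (i \in w.1 j)).

Definition surv_adj (n : nat) (w : outcome n) : rel 'I_n :=
  fun i j => [&& i \notin w.2, j \notin w.2 & kout_adj w i j].

(* |C_max|: size of a largest connected component of H(n;K,gamma)
   (0 if every vertex is deleted). *)
Definition cmax_size (n : nat) (w : outcome n) : nat :=
  \max_(x : 'I_n | x \notin w.2) #|[set y | connect (surv_adj w) x y]|.

Definition kout_prob (R : realType) (n K gamma : nat) (E : pred (outcome n)) : R :=
  #|[set w : outcome n | admissible K gamma w && E w]|%:R /
  #|[set w : outcome n | admissible K gamma w]|%:R.
Arguments kout_prob R n K gamma E : clear implicits.

From HB Require Import structures.
From mathcomp Require Import all_boot all_order all_algebra.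
From mathcomp Require Import all_classical all_reals all_analysis.
From mathcomp Require Import zify ring lra.
Import Order.TTheory GRing.Theory Num.Theory.
Import numFieldNormedType.Exports.
Set Implicit Arguments. Unset Strict Implicit. Unset Printing Implicit Defensive.

(* If the largest surviving component has at most n - g - lam vertices
   (g = gamma_n deleted nodes, forming D), growing a closed set of fewer than
   lam survivors by one component, and complementing within the survivors if
   needed, yields a set S of m survivors, lam <= m <= (n - g) / 2, with no edge
   to the other survivors.  Given D and S, every node of S must choose inside
   S :|: D and every other survivor must avoid S, an event of probability at
   most ((g + m) / n) ^ (K m) * ((n - m) / n) ^ (K (n - g - m)).  With
   'C(n - g, m) <= (e (n - g) / m) ^ m the union bound over S becomes a
   geometric series sum_m t_n ^ m <= 2 t_n, where
   t_n <= c (n / lam_n) (kappa B) ^ K_n + c' B ^ K_n for some kappa < 1 and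
   B = (1 + alpha) / 2 * e ^ (- (1 - alpha) / 2) = e ^ (- d), d being the
   denominator of r_4.  Thus K_n > r_4 gives B ^ K_n = O(lam_n / n), hence
   K_n -> oo and t_n -> 0. *)

Lemma card_ffun_family (I T : finType) (F : I -> {set T}) :
  #|[set f : {ffun I -> T} | [forall i, f i \in F i]]| = \prod_i #|F i|.
Proof.
rewrite -[RHS](_ : foldr muln 1 [seq #|mem (F i)| | i : I] = _); last first.
  by rewrite /image_mem foldr_map -big_enum /=; elim: (enum _) => [|i s IH];
    rewrite ?big_nil ?big_cons //= IH.
rewrite -card_family; apply: eq_card => f; rewrite inE.
by apply/forallP/familyP => H i; exact: H.
Qed.

Lemma leq_card_bigcup (T I : finType) (P : pred I) (F : I -> {set T}) :
  #|\bigcup_(i | P i) F i| <= \sum_(i | P i) #|F i|.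
Proof.
elim/big_ind2: _ => // [|m A k B hA hB]; first by rewrite cards0.
exact: leq_trans (leq_card_setU A B).1 (leq_add hA hB).
Qed.

Lemma leq_ffact_cross a b K : a <= b -> a ^_ K * b.+1 ^ K <= b ^_ K * a.+1 ^ K.
Proof.
move=> ab; elim: K => [|K IH]; first by rewrite !ffactn0.
rewrite !ffactnSr !expnS.
have step : (a - K) * b.+1 <= (b - K) * a.+1.
  by case: (leqP K a) => hK; [nia | rewrite (_ : a - K = 0) //; lia].
have := leq_mul IH step; congr (_ <= _); rewrite /=; ring.
Qed.

Lemma leq_bin_cross a b K : a <= b -> 'C(a, K) * b.+1 ^ K <= 'C(b, K) * a.+1 ^ K.
Proof.
move=> ab; have := leq_ffact_cross K ab; rewrite -!bin_ffact.
by rewrite mulnAC [X in _ <= X]mulnAC leq_pmul2r ?fact_gt0.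
Qed.

Section SurvivingGraph.
Variables (n : nat) (w : outcome n).

Definition surv_closed (S : {set 'I_n}) : bool :=
  [forall i, forall j, [&& i \in S, j \notin S & j \notin w.2] ==> ~~ kout_adj w i j].

Definition component (x : 'I_n) : {set 'I_n} := [set y | connect (surv_adj w) x y].

Lemma kout_adjC i j : kout_adj w i j = kout_adj w j i.
Proof. by rewrite /kout_adj eq_sym orbC. Qed.

Lemma surv_closed0 : surv_closed finset.set0.
Proof. by apply/forallP => i; apply/forallP => j; rewrite inE. Qed.

Lemma component_sub_surv x : x \notin w.2 -> component x \subset ~: w.2.
Proof.
move=> xD; apply/fintype.subsetP => y; rewrite !inE => cxy.
have cl : closed_mem (surv_adj w) (mem [pred v | v \notin w.2]).
  by move=> a b /and3P[aD bD _]; rewrite !inE aD bD.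
by have := closed_connect cl cxy; rewrite !inE xD => <-.
Qed.

Lemma surv_closed_component x : x \notin w.2 -> surv_closed (component x).
Proof.
move=> xD; apply/forallP => i; apply/forallP => j.
apply/implyP => /and3P[iC jC jD]; apply/negP => adj.
have iD : i \notin w.2 by have := fintype.subsetP (component_sub_surv xD) i iC; rewrite inE.
move: jC; rewrite !inE => /negP; apply; move: iC; rewrite inE => /connect_trans; apply.
by apply: connect1; rewrite /surv_adj iD jD adj.
Qed.

Lemma card_component_le x : x \notin w.2 -> #|component x| <= cmax_size w.
Proof. by move=> xD; rewrite /cmax_size; exact: leq_bigmax_cond. Qed.

Lemma surv_closedU S T : surv_closed S -> surv_closed T -> surv_closed (S :|: T).
Proof.
move=> /forallP hS /forallP hT; apply/forallP => i; apply/forallP => j.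
apply/implyP; rewrite !inE negb_or => /and3P[/orP[iS|iT] /andP[jS jT] jD].
  by have := forallP (hS i) j; rewrite iS jS jD.
by have := forallP (hT i) j; rewrite iT jT jD.
Qed.

Lemma surv_closed_survD S : surv_closed S -> surv_closed (~: w.2 :\: S).
Proof.
move=> /forallP hS; apply/forallP => i; apply/forallP => j.
apply/implyP; rewrite !inE negb_and !negbK => /and3P[/andP[iS iD] jc jD].
have jS : j \in S by move: jc jD; case: (j \in S); case: (j \in w.2).
by have := forallP (hS j) i; rewrite jS iS iD kout_adjC.
Qed.

End SurvivingGraph.

Section ClosedOutcomes.
Variables (n K : nat).

(* The choices of node [i] compatible with [surv_closed w S] when [w.2 = D]. *)
Definition allowed (S D : {set 'I_n}) (i : 'I_n) : {set 'I_n} :=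
  if i \in S then (D :|: S) :\ i else if i \in D then [set~ i] else (~: S) :\ i.

Definition closed_outcomes (S D : {set 'I_n}) : {set outcome n} :=
  finset.setX [set f : {ffun 'I_n -> {set 'I_n}} | [forall i,
     f i \in [set X : {set 'I_n} | (X \subset allowed S D i) && (#|X| == K)]]] [set D].

Lemma card_closed_outcomes S D : #|closed_outcomes S D| = \prod_i 'C(#|allowed S D i|, K).
Proof.
rewrite cardsX cards1 muln1 card_ffun_family; apply: eq_bigr => i _.
exact: cards_draws.
Qed.

Lemma card_admissible g :
  #|[set w : outcome n | admissible K g w]| = 'C(n.-1, K) ^ n * 'C(n, g).
Proof.
have -> : [set w : outcome n | admissible K g w] =
    finset.setX [set f : {ffun 'I_n -> {set 'I_n}} | [forall i,
      f i \in [set X : {set 'I_n} | (X \subset [set~ i]) && (#|X| == K)]]]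
    [set D : {set 'I_n} | #|D| == g].
  apply/setP => -[f D]; rewrite !inE /admissible /=; congr (_ && _).
  apply: eq_forallb => i; rewrite inE andbC; congr (_ && _).
  apply/idP/idP => [ni|/fintype.subsetP h].
    apply/fintype.subsetP => j jX; rewrite in_setC1.
    by apply: contraNneq ni => e; move: jX; rewrite e.
  by apply/negP => /h; rewrite setC11.
rewrite cardsX card_draws card_ord card_ffun_family.
rewrite (eq_bigr (fun _ => 'C(n.-1, K))) ?prod_nat_const ?card_ord // => i _.
by rewrite cards_draws cardsC1 card_ord.
Qed.

Lemma closed_outcomesP (w : outcome n) S : admissible K #|w.2| w -> surv_closed w S ->
  S \subset ~: w.2 -> w \in closed_outcomes S w.2.
Proof.
case: w => f D /andP[/forallP adm _] /forallP sep _ /=.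
rewrite finset.in_setX !inE eqxx andbT; apply/forallP => i; rewrite inE.
have /andP[-> ni] := adm i; rewrite andbT; apply/fintype.subsetP => j jf.
have ij : i != j by apply: contraNneq ni => e; move: jf; rewrite -e.
rewrite /allowed; case: ifP => iS.
  rewrite !inE eq_sym ij /=; apply/negPn/negP; rewrite negb_or => /andP[jD jS].
  by have := forallP (sep i) j; rewrite iS jS jD /= /kout_adj ij jf.
case: ifP => iD; first by rewrite !inE eq_sym ij.
rewrite !inE eq_sym ij /=; apply/negP => jS.
by have := forallP (sep j) i; rewrite jS iS iD /= /kout_adj eq_sym ij jf orbT.
Qed.

Lemma card_allowed (S D : {set 'I_n}) (i : 'I_n) : S \subset ~: D ->
  #|allowed S D i| = if i \in S then (#|D| + #|S|).-1
                     else if i \in D then n.-1 else (n - #|S|).-1.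
Proof.
move=> SD; rewrite /allowed.
have cardDS : #|D :|: S| = #|D| + #|S|.
  by rewrite cardsU disjoint_setI0 ?cards0 ?subn0 // disjoint_sym finset.disjoints_subset.
case: ifP => iS.
  by have := cardsD1 i (D :|: S); rewrite !inE iS orbT cardDS add1n => ->.
case: ifP => iD; first by rewrite cardsC1 card_ord.
have := cardsD1 i (~: S); rewrite !inE iS add1n => e.
by rewrite cardsCs finset.setCK card_ord in e; rewrite e.
Qed.

End ClosedOutcomes.

Local Open Scope ring_scope.

Section SmallLargestComponent.
Variables (R : realType) (n : nat) (w : outcome n) (lam : R).

Lemma exists_surv_closed_mid : 0 < lam -> 3 * lam <= #|~: w.2|%:R ->
  (cmax_size w)%:R + lam <= #|~: w.2|%:R -> exists T : {set 'I_n},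
  [/\ T \subset ~: w.2, surv_closed w T, lam <= #|T|%:R & #|T|%:R + lam <= #|~: w.2|%:R].
Proof.
move=> lam_gt0 lam_le cmax_small.
pose small (T : {set 'I_n}) := [&& T \subset ~: w.2, surv_closed w T & #|T|%:R < lam].
have small0 : small finset.set0 by rewrite /small finset.sub0set surv_closed0 cards0.
(* Adding one component to a largest small closed set [S0] overshoots [lam]. *)
case: (arg_maxnP (fun T : {set 'I_n} => #|T|) small0) => S0 /and3P[S0D S0cl S0lam] S0max.
have [x xD xS0] : exists2 x, x \notin w.2 & x \notin S0.
  have /fintype.subsetPn[x] : ~~ (~: w.2 \subset S0).
    apply/negP => /subset_leq_card; rewrite -(ler_nat R) => ?; lra.
  by rewrite inE => xD xS0; exists x.
set C := component w x.
have xC : x \in C by rewrite inE connect0.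
have Ccmax : #|C|%:R <= #|~: w.2|%:R - lam :> R.
  by rewrite lerBrDr; apply: le_trans cmax_small; rewrite lerD2r ler_nat card_component_le.
have S1D : S0 :|: C \subset ~: w.2 by rewrite finset.subUset S0D component_sub_surv.
have S1cl := surv_closedU S0cl (surv_closed_component xD).
have S1lam : lam <= #|S0 :|: C|%:R.
  rewrite leNgt; apply/negP => S1small.
  have /S0max : small (S0 :|: C) by rewrite /small S1D S1cl S1small.
  apply/negP; rewrite -ltnNge; apply: proper_card; apply/properP.
  by split; [exact: finset.subsetUl | exists x; rewrite // inE xC orbT].
have [S1le|S1gt] := lerP #|S0 :|: C|%:R (#|~: w.2|%:R - lam).
  by exists (S0 :|: C); split; rewrite // -lerBrDr.
(* Otherwise [C] itself works: [#|C| > #|~: w.2| - 2 lam >= lam]. *)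
exists C; split; rewrite ?component_sub_surv ?surv_closed_component // -?lerBrDr //.
have : #|S0 :|: C|%:R <= #|S0|%:R + #|C|%:R :> R.
  by rewrite -natrD ler_nat (leq_card_setU S0 C).1.
lra.
Qed.

Lemma exists_surv_closed_half : 0 < lam -> 3 * lam <= #|~: w.2|%:R ->
  (cmax_size w)%:R + lam <= #|~: w.2|%:R -> exists S : {set 'I_n},
  [/\ S \subset ~: w.2, surv_closed w S, lam <= #|S|%:R & (2 * #|S| <= #|~: w.2|)%N].
Proof.
move=> lam_gt0 lam_le cmax_small.
have [T [TD Tcl Tlam Tle]] := exists_surv_closed_mid lam_gt0 lam_le cmax_small.
have [T_half|T_big] := leqP (2 * #|T|) #|~: w.2|; first by exists T.
have cardT : #|~: w.2 :\: T| = (#|~: w.2| - #|T|)%N by rewrite cardsD (finset.setIidPr TD).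
have Tsurv : (#|T| <= #|~: w.2|)%N by rewrite subset_leq_card.
exists (~: w.2 :\: T); split.
- exact: finset.subsetDl.
- exact: surv_closed_survD.
- by rewrite cardT natrB //; lra.
- by rewrite cardT; lia.
Qed.

End SmallLargestComponent.

Section UnionBound.
Variable R : realType.

Lemma leq_of_ler_scaled (a : R) (g n : nat) : a <= 1 -> g%:R <= a * n%:R -> (g <= n)%N.
Proof. by move=> a1 g_le; rewrite -(ler_nat R); apply: le_trans g_le (ler_piMl _ a1). Qed.

Lemma bin_ratio_le (a b K : nat) : (a <= b)%N -> (K <= b)%N ->
  'C(a, K)%:R <= 'C(b, K)%:R * (a.+1%:R / b.+1%:R) ^+ K :> R.
Proof.
move=> ab Kb; rewrite expr_div_n mulrA ler_pdivlMr ?exprn_gt0 ?ltr0n //.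
by rewrite -!natrX -!natrM ler_nat leq_bin_cross.
Qed.

Lemma sum_geom_le (t : R) N : 0 <= t <= 1 / 2 -> \sum_(i < N) t ^+ i.+1 <= 2 * t.
Proof.
move=> /andP[t0 t1]; elim: N => [|N IH]; first by rewrite big_ord0; lra.
rewrite big_ord_recl expr1.
under eq_bigr do rewrite exprS.
rewrite -mulr_sumr.
have : t * \sum_(i < N) t ^+ i.+1 <= t * (2 * t) by rewrite ler_wpM2l.
nra.
Qed.

Lemma sum_pow_le (t : R) N (P : pred nat) : 0 <= t <= 1 / 2 -> ~~ P 0%N ->
  \sum_(m < N | P m) t ^+ m <= 2 * t.
Proof.
move=> t_half nP0; case: N => [|N]; first by rewrite big_ord0; lra.
rewrite big_mkcond big_ord_recl /= (negbTE nP0) add0r.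
apply: le_trans (sum_geom_le N t_half); apply: ler_sum => i _.
by case: ifP => // _; rewrite exprn_ge0 //; case/andP: t_half.
Qed.

Lemma sum_subsets_by_card n (B : {set 'I_n}) (Q : pred nat) (h : nat -> R) :
  \sum_(S : {set 'I_n} | (S \subset B) && Q #|S|) h #|S| =
  \sum_(m < n.+1 | Q m) 'C(#|B|, m)%:R * h m.
Proof.
have cardS (S : {set 'I_n}) : (#|S| < n.+1)%N by rewrite ltnS -[X in (_ <= X)%N]card_ord max_card.
rewrite (partition_big (fun S : {set 'I_n} => (inord #|S| : 'I_n.+1)) Q); last first.
  by move=> S /andP[_ QS]; rewrite inordK ?cardS.
apply: eq_bigr => m Qm.
rewrite (eq_bigl (fun S => S \in [set S : {set 'I_n} | (S \subset B) && (#|S| == m)])); last first.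
  move=> S; rewrite inE; apply/idP/idP => [/andP[/andP[-> _] /eqP <-]|/andP[-> /eqP e]].
    by rewrite inordK ?cardS ?eqxx.
  by rewrite /= e Qm inord_val eqxx.
rewrite (eq_bigr (fun _ => h m)) => [|S]; last by rewrite inE => /andP[_ /eqP ->].
by rewrite sumr_const cards_draws mulr_natl.
Qed.

(* Bounds the probability that a given set of [m] survivors is closed when
   [g] nodes are deleted: [m] nodes choose among [g + m - 1] labels and the other
   [n - g - m] survivors avoid [m] labels. *)
Definition cut_weight (n K g m : nat) : R :=
  (((g + m)%:R / n%:R) ^+ K) ^+ m * (((n - m)%:R / n%:R) ^+ K) ^+ (n - g - m).

Section CutOutcomes.
Variables (n K : nat) (S D : {set 'I_n}).
Let p : R := ((#|D| + #|S|)%:R / n%:R) ^+ K.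
Let q : R := ((n - #|S|)%:R / n%:R) ^+ K.

Lemma bin_allowed_le i : (K < n)%N -> S \subset ~: D -> (0 < #|S|)%N ->
  (2 * #|S| <= n - #|D|)%N ->
  'C(#|allowed S D i|, K)%:R <=
    'C(n.-1, K)%:R * (if i \in S then p else if i \in D then 1 else q).
Proof.
move=> Kn SD S0 S2; rewrite card_allowed //.
case: ifP => iS; last case: ifP => iD; last 2 first.
- by rewrite mulr1.
- have := @bin_ratio_le (n - #|S|).-1 n.-1 K; rewrite !prednK; try lia.
  by apply; lia.
have := @bin_ratio_le (#|D| + #|S|).-1 n.-1 K; rewrite !prednK; try lia.
by apply; lia.
Qed.

Lemma prod_cut_factors : S \subset ~: D ->
  \prod_i (if i \in S then p else if i \in D then 1 else q) =
  p ^+ #|S| * q ^+ (n - #|D| - #|S|).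
Proof.
move=> SD; rewrite (bigID (fun i => i \in S)) /=.
rewrite (eq_bigr (fun _ => p)) => [|i -> //]; rewrite prodr_const; congr (_ * _).
rewrite (bigID (fun i => i \in D)) /= big1 ?mul1r => [|i /andP[/negbTE -> ->] //].
rewrite (eq_bigr (fun _ => q)) => [|i /andP[/negbTE -> /negbTE ->] //].
rewrite prodr_const; congr (_ ^+ _).
have cardSD : #|~: (S :|: D)| = (n - #|D| - #|S|)%N.
  have := cardsC (S :|: D); rewrite card_ord cardsU disjoint_setI0 ?finset.disjoints_subset //.
  by rewrite cards0 subn0; lia.
by rewrite -cardSD; apply: eq_card => i; rewrite !inE negb_or.
Qed.

Lemma card_closed_outcomes_le : (K < n)%N -> S \subset ~: D -> (0 < #|S|)%N ->
  (2 * #|S| <= n - #|D|)%N ->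
  (#|closed_outcomes K S D|)%:R <= 'C(n.-1, K)%:R ^+ n * cut_weight n K #|D| #|S|.
Proof.
move=> Kn SD S0 S2; rewrite card_closed_outcomes natr_prod.
apply: (@le_trans _ _ (\prod_i ('C(n.-1, K)%:R *
    (if i \in S then p else if i \in D then 1 else q)))).
  by apply: ler_prod => i _; rewrite ler0n bin_allowed_le.
by rewrite big_split /= prodr_const card_ord prod_cut_factors.
Qed.

End CutOutcomes.
End UnionBound.

Section KoutProb.
Variables (R : realType) (n K g : nat).

Lemma card_admissible_gt0 : (K < n)%N -> (g <= n)%N ->
  (0 < #|[set w : outcome n | admissible K g w]|)%N.
Proof. by move=> Kn gn; rewrite card_admissible muln_gt0 expn_gt0 !bin_gt0 gn; lia. Qed.

Lemma kout_prob_le1 (E : pred (outcome n)) : kout_prob R n K g E <= 1.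
Proof.
rewrite /kout_prob; have [->|A0] := posnP #|[set w : outcome n | admissible K g w]|.
  by rewrite invr0 mulr0.
rewrite ler_pdivrMr ?ltr0n // mul1r ler_nat; apply: subset_leq_card.
by apply/fintype.subsetP => w; rewrite !inE => /andP[].
Qed.

Lemma kout_probC (E : pred (outcome n)) : (K < n)%N -> (g <= n)%N ->
  kout_prob R n K g (fun w => ~~ E w) = 1 - kout_prob R n K g E.
Proof.
move=> Kn gn; set A := [set w : outcome n | admissible K g w].
have A0 : #|A|%:R != 0 :> R by rewrite pnatr_eq0 -lt0n card_admissible_gt0.
rewrite /kout_prob -/A -[X in _ = X - _](divff A0) -mulrBl -natrB; last first.
  by apply: subset_leq_card; apply/fintype.subsetP => w; rewrite !inE => /andP[].
congr (_%:R / _).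
have -> : [set w | admissible K g w & E w] = A :&: [set w | E w].
  by apply/setP => w; rewrite !inE.
have -> : [set w | admissible K g w & ~~ E w] = A :\: [set w | E w].
  by apply/setP => w; rewrite !inE andbC.
by rewrite -(cardsID [set w | E w] A) addKn.
Qed.

Variable lam : R.
Let cut_size (m : nat) := (lam <= m%:R) && (2 * m <= n - g)%N.

Lemma card_small_cmax_le : 0 < lam -> 3 * lam <= (n - g)%:R -> (g <= n)%N ->
  (#|[set w : outcome n | admissible K g w && ~~ (n%:R - g%:R - lam < (cmax_size w)%:R)%R]|
   <= \sum_(D : {set 'I_n} | #|D| == g)
        \sum_(S : {set 'I_n} | (S \subset ~: D) && cut_size #|S|) #|closed_outcomes K S D|)%N.
Proof.
move=> lam0 lam3 gn.
pose closed_union := \bigcup_(D : {set 'I_n} | #|D| == g)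
  \bigcup_(S : {set 'I_n} | (S \subset ~: D) && cut_size #|S|) closed_outcomes K S D.
apply: (@leq_trans #|closed_union|); last first.
  apply: leq_trans (leq_card_bigcup _ _) _; apply: leq_sum => D _; exact: leq_card_bigcup.
apply: subset_leq_card; apply/fintype.subsetP => w; rewrite inE => /andP[adm bad].
have cardD : #|w.2| = g by case/andP: adm => _ /eqP.
have cardR : #|~: w.2| = (n - g)%N by rewrite cardsCs finset.setCK card_ord cardD.
have [||S [SD Scl Slam S2]] := exists_surv_closed_half (lam := lam) (w := w) lam0.
- by rewrite cardR.
- by rewrite cardR natrB //; move: bad; rewrite -leNgt; lra.
apply/bigcupP; exists w.2; first by rewrite cardD.
apply/bigcupP; exists S; first by rewrite SD /cut_size Slam -cardR S2.
by apply: closed_outcomesP; rewrite ?cardD.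
Qed.

Lemma sum_card_closed_outcomes_le (t : R) (D : {set 'I_n}) :
  (K < n)%N -> #|D| = g -> 0 < lam -> 0 <= t <= 1 / 2 ->
  (forall m, (0 < m)%N -> lam <= m%:R -> (2 * m <= n - g)%N ->
     'C(n - g, m)%:R * cut_weight R n K g m <= t ^+ m) ->
  \sum_(S : {set 'I_n} | (S \subset ~: D) && cut_size #|S|) (#|closed_outcomes K S D|)%:R
    <= 'C(n.-1, K)%:R ^+ n * (2 * t).
Proof.
move=> Kn cardD lam0 t_half cut_le.
have cut_size_gt0 m : lam <= m%:R -> (0 < m)%N by move/(lt_le_trans lam0); rewrite ltr0n.
apply: (@le_trans _ _ (\sum_(S : {set 'I_n} | (S \subset ~: D) && cut_size #|S|)
    'C(n.-1, K)%:R ^+ n * cut_weight R n K g #|S|)).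
  apply: ler_sum => S /andP[SD /andP[/cut_size_gt0 S0 S2]]; rewrite -cardD.
  by apply: card_closed_outcomes_le; rewrite ?cardD.
rewrite -mulr_sumr ler_wpM2l ?exprn_ge0 ?ler0n // sum_subsets_by_card.
have -> : #|~: D| = (n - g)%N by rewrite cardsCs finset.setCK card_ord cardD.
have cut0 : ~~ cut_size 0 by apply/negP => /andP[/cut_size_gt0].
apply: le_trans _ (sum_pow_le n.+1 t_half cut0).
by apply: ler_sum => m /andP[mlam m2]; apply: cut_le; rewrite ?cut_size_gt0.
Qed.

Lemma kout_prob_small_cmax_le (t : R) :
  (K < n)%N -> (g <= n)%N -> 0 < lam -> 3 * lam <= (n - g)%:R -> 0 <= t <= 1 / 2 ->
  (forall m, (0 < m)%N -> lam <= m%:R -> (2 * m <= n - g)%N ->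
     'C(n - g, m)%:R * cut_weight R n K g m <= t ^+ m) ->
  kout_prob R n K g (fun w => ~~ (n%:R - g%:R - lam < (cmax_size w)%:R)) <= 2 * t.
Proof.
move=> Kn gn lam0 lam3 t_half cut_le.
rewrite /kout_prob ler_pdivrMr ?ltr0n ?card_admissible_gt0 // card_admissible.
apply: le_trans (_ : _ <= \sum_(D : {set 'I_n} | #|D| == g) 'C(n.-1, K)%:R ^+ n * (2 * t)) _.
  have := card_small_cmax_le lam0 lam3 gn; rewrite -(ler_nat R) natr_sum => /le_trans.
  by apply; apply: ler_sum => D /eqP cardD; rewrite natr_sum sum_card_closed_outcomes_le.
rewrite (eq_bigl (fun D => D \in [set D : {set 'I_n} | #|D| == g])) => [|D]; last by rewrite inE.
rewrite sumr_const card_draws card_ord -[_ *+ _]mulr_natr natrM natrX.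
by rewrite mulrAC [X in _ <= X]mulrC.
Qed.

End KoutProb.

Lemma leq_ffact_exp r m : (r ^_ m <= r ^ m)%N.
Proof.
elim: m => [|m IH]; first by rewrite ffactn0.
by rewrite ffactnSr expnS mulnC leq_mul ?leq_subr.
Qed.

Section BinomialBound.
Variable R : realType.

Lemma bin_le_expR (r m : nat) : (0 < m)%N ->
  'C(r, m)%:R <= (expR 1 * r%:R / m%:R) ^+ m :> R.
Proof.
case: m => // m _; set M := m.+1.
have M0 : (0 : R) < M%:R by rewrite ltr0n.
have fact0 : (0 : R) < M`!%:R by rewrite ltr0n fact_gt0.
have MM_le : M%:R ^+ M / M`!%:R <= expR 1 ^+ M :> R.
  by rewrite -expRM_natl mulr1; have := expR_ge1Dxn m (ler0n R M); lra.
have bin_le : 'C(r, M)%:R * M`!%:R <= r%:R ^+ M :> R.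
  by rewrite -natrM -natrX ler_nat bin_ffact leq_ffact_exp.
rewrite -ler_pdivlMr // in bin_le; apply: le_trans bin_le _.
rewrite expr_div_n exprMn mulrAC [X in _ <= X]mulrC ler_wpM2l ?exprn_ge0 ?ler0n //.
by rewrite ler_pdivlMr ?exprn_gt0 // mulrC.
Qed.

End BinomialBound.

Section CutRate.
Variables (R : realType) (alpha : R).

Definition cut_base : R := (1 + alpha) / 2 * expR (- ((1 - alpha) / 2)).
Definition cut_ratio : R := (alpha + (1 - alpha) / 4) / ((1 + alpha) / 2).
(* Bounds the [m]-th root of the [m]-th term of the union bound; the two summands
   cover [m <= (1 - alpha) n / 4] and larger [m]. *)
Definition cut_rate (lam : R) (n K : nat) : R :=
  expR 1 * (n%:R / lam) * (cut_ratio * cut_base) ^+ K +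
  expR 1 * (4 / (1 - alpha)) * cut_base ^+ K.

Lemma cut_weight_le (n K g m : nat) : 0 <= alpha < 1 -> (0 < n)%N ->
  g%:R <= alpha * n%:R -> (2 * m <= n - g)%N ->
  cut_weight R n K g m <= (((g + m)%:R / n%:R * expR (- ((1 - alpha) / 2))) ^+ K) ^+ m.
Proof.
move=> /andP[a0 a1] n0 g_le m_le; have nR : (0 : R) < n%:R by rewrite ltr0n.
have gn : (g <= n)%N := leq_of_ler_scaled (ltW a1) g_le.
have mn : (m <= n)%N by lia.
have m2 : 2 * m%:R <= n%:R - g%:R :> R.
  by rewrite -(ler_nat R) natrM natrB in m_le.
rewrite /cut_weight [in X in _ <= X]exprMn [in X in _ <= X]exprMn.
rewrite ler_wpM2l ?exprn_ge0 ?divr_ge0 ?ler0n // exprAC [X in _ <= X]exprAC.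
apply: lerXn2r; rewrite ?nnegrE ?exprn_ge0 ?divr_ge0 ?expR_ge0 ?ler0n //.
have q_le : (n - m)%:R / n%:R <= expR (- (m%:R / n%:R)) :> R.
  by rewrite natrB // mulrBl divff ?gt_eqF // expR_ge1Dx.
apply: le_trans (lerXn2r _ _ _ q_le) _; rewrite ?nnegrE ?divr_ge0 ?ler0n ?expR_ge0 //.
rewrite -expRM_natr -expRM_natl ler_expR !natrB; try lia.
rewrite mulNr mulrN lerN2 mulrAC ler_pdivlMr // -mulrA ler_wpM2l ?ler0n //; nra.
Qed.

Lemma cut_factor_le (lam : R) (n K g m : nat) : 0 < alpha < 1 -> 0 < lam -> (0 < n)%N ->
  g%:R <= alpha * n%:R -> lam <= m%:R -> (2 * m <= n - g)%N ->
  expR 1 * (n - g)%:R / m%:R * ((g + m)%:R / n%:R * expR (- ((1 - alpha) / 2))) ^+ K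
    <= cut_rate lam n K.
Proof.
move=> /andP[a0 a1] lam0 n0 g_le lam_le m_le; rewrite -[expR 1 * _ / _]mulrA.
have nR : (0 : R) < n%:R by rewrite ltr0n.
have mR : (0 : R) < m%:R by apply: lt_le_trans lam_le.
have gn : (g <= n)%N := leq_of_ler_scaled (ltW a1) g_le.
have m2 : 2 * m%:R <= n%:R - g%:R :> R.
  by rewrite -(ler_nat R) natrM natrB in m_le.
have c0 : 0 < expR (- ((1 - alpha) / 2)) :> R by exact: expR_gt0.
have base0 : 0 <= cut_base by rewrite mulr_ge0 ?ltW //; lra.
have ratio0 : 0 <= cut_ratio by rewrite divr_ge0; lra.
have term1_ge0 : 0 <= expR 1 * (n%:R / lam) * (cut_ratio * cut_base) ^+ K.
  apply: mulr_ge0; last by apply/exprn_ge0/mulr_ge0.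
  by apply: mulr_ge0; rewrite ?expR_ge0 // divr_ge0 ?ler0n ?ltW.
have term2_ge0 : 0 <= expR 1 * (4 / (1 - alpha)) * cut_base ^+ K.
  by apply: mulr_ge0; [apply: mulr_ge0; rewrite ?expR_ge0 ?divr_ge0 //; lra | exact: exprn_ge0].
have ng_le : (n - g)%:R <= n%:R :> R by rewrite ler_nat leq_subr.
have X0 : 0 <= (g + m)%:R / n%:R * expR (- ((1 - alpha) / 2)) :> R.
  by rewrite mulr_ge0 ?divr_ge0 ?ler0n ?ltW.
have eX0 : 0 <= expR 1 * ((n - g)%:R / m%:R) :> R by rewrite mulr_ge0 ?expR_ge0 ?divr_ge0 ?ler0n.
rewrite /cut_rate; case: (lerP m%:R ((1 - alpha) / 4 * n%:R)) => m_small.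
- apply: le_trans (_ : _ <= expR 1 * (n%:R / lam) * (cut_ratio * cut_base) ^+ K) _.
    apply: ler_pM; rewrite ?exprn_ge0 //.
      rewrite ler_wpM2l ?expR_ge0 // ler_pdivrMr // mulrAC ler_pdivlMr //.
      by apply: ler_pM; rewrite ?ler0n // ltW.
    apply: lerXn2r; [by rewrite nnegrE | by rewrite nnegrE mulr_ge0 |].
    rewrite /cut_ratio /cut_base mulrA divfK; last lra.
    apply: ler_wpM2r; first exact: ltW.
    by rewrite ler_pdivrMr // natrD; nra.
  by rewrite lerDl.
- apply: le_trans (_ : _ <= expR 1 * (4 / (1 - alpha)) * cut_base ^+ K) _.
    apply: ler_pM; rewrite ?exprn_ge0 //.
      by rewrite ler_wpM2l ?expR_ge0 // ler_pdivrMr // mulrC mulrA ler_pdivlMr; nra.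
    apply: lerXn2r; rewrite ?nnegrE //.
    apply: ler_wpM2r; first exact: ltW.
    by rewrite ler_pdivrMr // natrD; nra.
  by rewrite lerDr.
Qed.

Lemma binomial_cut_weight_le (lam : R) (n K g m : nat) : 0 < alpha < 1 -> 0 < lam ->
  (0 < n)%N -> g%:R <= alpha * n%:R -> lam <= m%:R -> (2 * m <= n - g)%N ->
  'C(n - g, m)%:R * cut_weight R n K g m <= cut_rate lam n K ^+ m.
Proof.
move=> a01 lam0 n0 g_le lam_le m_le; have /andP[a0 a1] := a01.
have m0 : (0 < m)%N by rewrite -(ltr0n R); apply: lt_le_trans lam_le.
set X := (g + m)%:R / n%:R * expR (- ((1 - alpha) / 2)).
have X0 : 0 <= X by rewrite mulr_ge0 ?divr_ge0 ?expR_ge0 ?ler0n.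
have factor0 : 0 <= expR 1 * (n - g)%:R / m%:R * X ^+ K.
  apply: mulr_ge0 (exprn_ge0 _ X0); apply: divr_ge0 (ler0n _ _).
  exact: mulr_ge0 (expR_ge0 _) (ler0n _ _).
have factor_le := cut_factor_le K a01 lam0 n0 g_le lam_le m_le.
apply: le_trans (_ : _ <= (expR 1 * (n - g)%:R / m%:R * X ^+ K) ^+ m) _.
  rewrite exprMn; apply: ler_pM; rewrite ?ler0n ?bin_le_expR //.
    by apply: mulr_ge0; apply/exprn_ge0/exprn_ge0; rewrite divr_ge0 ?ler0n.
  by apply: cut_weight_le; rewrite ?(ltW a0).
apply: lerXn2r; [by rewrite nnegrE | by rewrite nnegrE (le_trans factor0 factor_le) |].
exact: factor_le.
Qed.

End CutRate.

Section CutRateBounds.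
Variables (R : realType) (alpha : R).

Definition decay : R := (1 - alpha) / 2 - ln ((1 + alpha) / 2).
Definition cut_const : R := expR (- decay - alpha) / ((1 - alpha) * alpha).

Lemma decay_gt0 : 0 < alpha < 1 -> 0 < decay.
Proof.
move=> /andP[a0 a1]; rewrite /decay.
have : ln ((1 + alpha) / 2) < 0 by apply: ln_lt0; apply/andP; split; lra.
lra.
Qed.

Lemma cut_baseE : 0 < alpha < 1 -> cut_base alpha = expR (- decay).
Proof.
move=> /andP[a0 a1]; rewrite /cut_base /decay opprB addrC expRD lnK // posrE; lra.
Qed.

Lemma cut_base_bounds : 0 < alpha < 1 -> 0 < cut_base alpha < 1.
Proof.
move=> a01; rewrite cut_baseE // expR_gt0 /= -[X in _ < X]expR0 ltr_expR oppr_lt0.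
exact: decay_gt0.
Qed.

Lemma cut_ratio_bounds : 0 < alpha < 1 -> 0 <= cut_ratio alpha < 1.
Proof.
move=> /andP[a0 a1]; rewrite /cut_ratio divr_ge0 /=; try lra.
by rewrite ltr_pdivrMr; lra.
Qed.

Lemma cut_base_pow_le (lam : R) (n K : nat) : 0 < alpha < 1 -> 0 < lam -> (0 < n)%N ->
  K%:R > 1 + (ln (1 + n%:R * alpha / lam) + alpha + ln (1 - alpha)) / decay ->
  cut_base alpha ^+ K <= cut_const * (lam / n%:R).
Proof.
move=> a01 lam0 n0 K_gt; have /andP[a0 a1] := a01; have d0 := decay_gt0 a01.
have nR : (0 : R) < n%:R by rewrite ltr0n.
set y := n%:R * alpha / lam in K_gt *.
have y0 : 0 < y by rewrite divr_gt0 // mulr_gt0.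
have Kd : K%:R * decay > decay + (ln (1 + y) + alpha + ln (1 - alpha)).
  by move: K_gt; rewrite -ltrBrDl ltr_pdivrMr //; nra.
rewrite cut_baseE // -expRM_natl.
apply: le_trans (_ : _ <= expR (- decay - alpha) / (1 - alpha) / (1 + y)) _.
  have -> : expR (- decay - alpha) / (1 - alpha) / (1 + y) =
            expR (- decay - alpha - ln (1 - alpha) - ln (1 + y)).
    by rewrite !expRB !lnK //; rewrite posrE; lra.
  by rewrite ler_expR; lra.
have -> : cut_const * (lam / n%:R) = expR (- decay - alpha) / (1 - alpha) / y.
  by rewrite /cut_const /y invf_div; field; rewrite !gt_eqF //; lra.
rewrite ler_pM2l ?divr_gt0 ?expR_gt0 //; last lra.
by rewrite lef_pV2 ?posrE; lra.
Qed.

Lemma cut_rate_le (lam : R) (n K : nat) : 0 < alpha < 1 -> 0 < lam -> (0 < n)%N ->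
  cut_base alpha ^+ K <= cut_const * (lam / n%:R) ->
  cut_rate alpha lam n K <= expR 1 * cut_const * cut_ratio alpha ^+ K +
                            expR 1 * (4 / (1 - alpha)) * (cut_const * (lam / n%:R)).
Proof.
move=> a01 lam0 n0 base_le; have /andP[a0 a1] := a01.
have nR : (0 : R) < n%:R by rewrite ltr0n.
have /andP[ratio0 _] := cut_ratio_bounds a01.
rewrite /cut_rate exprMn; apply: lerD.
  have -> : expR 1 * cut_const * cut_ratio alpha ^+ K =
      expR 1 * (n%:R / lam) * (cut_ratio alpha ^+ K * (cut_const * (lam / n%:R))).
    by field; rewrite !gt_eqF.
  apply: ler_wpM2l; last by apply: ler_wpM2l; rewrite ?exprn_ge0.
  by apply: mulr_ge0; rewrite ?expR_ge0 // divr_ge0 ?ler0n ?ltW.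
by rewrite ler_wpM2l // mulr_ge0 ?expR_ge0 // divr_ge0 //; lra.
Qed.

Lemma cut_rate_ge0 (lam : R) (n K : nat) : 0 < alpha < 1 -> 0 < lam ->
  0 <= cut_rate alpha lam n K.
Proof.
move=> a01 lam0; have /andP[a0 a1] := a01.
have /andP[ratio0 _] := cut_ratio_bounds a01; have /andP[base0 _] := cut_base_bounds a01.
apply: addr_ge0; apply: mulr_ge0.
- by apply: mulr_ge0; rewrite ?expR_ge0 // divr_ge0 ?ler0n ?ltW.
- by apply/exprn_ge0/mulr_ge0 => //; apply: ltW.
- by apply: mulr_ge0; rewrite ?expR_ge0 // divr_ge0; lra.
- exact/exprn_ge0/ltW.
Qed.

End CutRateBounds.

Local Open Scope classical_set_scope.
Local Open Scope ring_scope.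

Lemma kout_prob_large_cmax_ge (R : realType) (alpha lam : R) (n K g : nat) :
  0 < alpha < 1 -> 0 < lam -> (K < n)%N -> g%:R <= alpha * n%:R ->
  3 * lam <= (1 - alpha) * n%:R -> cut_rate alpha lam n K <= 1 / 2 ->
  1 - 2 * cut_rate alpha lam n K <=
    kout_prob R n K g (fun w => n%:R - g%:R - lam < (cmax_size w)%:R).
Proof.
move=> a01 lam0 Kn g_le lam_le t_le; have /andP[a0 a1] := a01.
have n0 : (0 < n)%N by lia.
have gn : (g <= n)%N := leq_of_ler_scaled (ltW a1) g_le.
have lam3 : 3 * lam <= (n - g)%:R by rewrite natrB //; nra.
have t_half : 0 <= cut_rate alpha lam n K <= 1 / 2 by rewrite t_le cut_rate_ge0.
have := kout_prob_small_cmax_le Kn gn lam0 lam3 t_half.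
rewrite kout_probC // => /(_ (fun m _ => binomial_cut_weight_le K a01 lam0 n0 g_le)).
lra.
Qed.

Section Asymptotics.
Variable R : realType.

Lemma littleo_div_cvg0 (f : nat -> R) :
  f =o_\oo (fun n : nat => n%:R : R) -> f n / n%:R @[n --> \oo] --> 0.
Proof.
move=> /eqoP fo; apply/cvgrPdist_le => e e0; near=> n.
rewrite sub0r normrN normrM normfV normr_nat ler_pdivrMr ?ltr0n; last first.
  by near: n; exact: nbhs_infty_gt.
by rewrite -[X in _ <= _ * X]normr_nat; near: n; exact: fo.
Unshelve. all: by end_near.
Qed.

Lemma expr_cvg0_cvgn (b : R) (k : nat -> nat) :
  0 < b <= 1 -> b ^+ k n @[n --> \oo] --> 0 -> k n @[n --> \oo] --> \oo.
Proof.
move=> /andP[b0 b1] bk; apply/cvgnyPgt => A; near=> n.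
rewrite ltnNge; apply/negP => /(ler_wiXn2l (ltW b0) b1); apply/negP; rewrite -ltNge.
by near: n; exact: (cvgr_lt 0 bk _ (exprn_gt0 A b0)).
Unshelve. all: by end_near.
Qed.

Lemma cut_rate_cvg0 (alpha : R) (lambda : nat -> R) (K : nat -> nat) : 0 < alpha < 1 ->
  lambda n / n%:R @[n --> \oo] --> 0 -> (\forall n \near \oo, 0 < lambda n) ->
  (\forall n \near \oo, (K n)%:R >
     1 + (ln (1 + n%:R * alpha / lambda n) + alpha + ln (1 - alpha)) / decay alpha) ->
  cut_rate alpha (lambda n) n (K n) @[n --> \oo] --> 0.
Proof.
move=> a01 rho0 lam_gt0 K_gt.
have /andP[ratio0 ratio1] := cut_ratio_bounds a01.
have /andP[base0 base1] := cut_base_bounds a01.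
have C_rho0 : cut_const alpha * (lambda n / n%:R) @[n --> \oo] --> 0.
  by rewrite -(mulr0 (cut_const alpha)); exact: cvgMl_tmp.
have base_le : \forall n \near \oo, cut_base alpha ^+ K n <= cut_const alpha * (lambda n / n%:R).
  near=> n; apply: cut_base_pow_le => //; last by near: n.
    by near: n.
  by near: n; exact: nbhs_infty_gt.
have base_cvg0 : cut_base alpha ^+ K n @[n --> \oo] --> 0.
  apply: (squeeze_cvgr _ (cvg_cst 0) C_rho0); near=> n.
  apply/andP; split; first exact/exprn_ge0/ltW.
  by near: n.
have K_oo : K n @[n --> \oo] --> \oo.
  by apply: (expr_cvg0_cvgn _ base_cvg0); rewrite base0 ltW.
have ratio_cvg0 : cut_ratio alpha ^+ K n @[n --> \oo] --> 0.
  by apply: cvg_comp K_oo (cvg_expr _); rewrite ger0_norm.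
have bound_cvg0 : expR 1 * cut_const alpha * cut_ratio alpha ^+ K n +
    expR 1 * (4 / (1 - alpha)) * (cut_const alpha * (lambda n / n%:R)) @[n --> \oo] --> 0.
  rewrite -[0]addr0 -[X in _ --> X + _](mulr0 (expR 1 * cut_const alpha)).
  rewrite -[X in _ --> _ + X](mulr0 (expR 1 * (4 / (1 - alpha)))).
  exact: cvgD (cvgMl_tmp _) (cvgMl_tmp _).
apply: (squeeze_cvgr _ (cvg_cst 0) bound_cvg0); near=> n.
have lam0 : 0 < lambda n by near: n.
have n0 : (0 < n)%N by near: n; exact: nbhs_infty_gt.
rewrite cut_rate_ge0 //= cut_rate_le //; by near: n.
Unshelve. all: by end_near.
Qed.

End Asymptotics.

Unset Implicit Arguments.

Theorem theorem3p4 (R : realType) (alpha : R) (lambda : nat -> R) (K : nat -> nat) :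
  0 < alpha < 1 ->
  lambda =o_\oo (fun n : nat => n%:R : R) ->
  lambda n @[n --> \oo] --> +oo ->
  (\forall n \near \oo, (K n < n)%N) ->
  (forall n : nat,
     (K n)%:R > 1 + (ln (1 + n%:R * alpha / lambda n) + alpha + ln (1 - alpha)) /
                    ((1 - alpha) / 2 - ln ((1 + alpha) / 2))) ->
  kout_prob R n (K n) (Num.truncn (alpha * n%:R))
    (fun w => (cmax_size w)%:R >
              n%:R - (Num.truncn (alpha * n%:R))%:R - lambda n)
    @[n --> \oo] --> (1 : R).
Proof.
move=> a01 lam_o lam_oo K_lt K_gt; have /andP[a0 a1] := a01.
have rho0 := littleo_div_cvg0 lam_o.
have lam_gt0 : \forall n \near \oo, 0 < lambda n by exact: (cvgryPgt _).1 lam_oo 0.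
have t_cvg0 : cut_rate alpha (lambda n) n (K n) @[n --> \oo] --> 0.
  by apply: cut_rate_cvg0 => //; exact: nearW.
have lam_small : \forall n \near \oo, 3 * lambda n <= (1 - alpha) * n%:R.
  near=> n; have n0 : (0 : R) < n%:R by rewrite ltr0n; near: n; exact: nbhs_infty_gt.
  have : lambda n / n%:R <= (1 - alpha) / 3 by near: n; apply: (cvgr_le 0 rho0); lra.
  by rewrite ler_pdivrMr //; nra.
have lower_cvg1 : 1 - 2 * cut_rate alpha (lambda n) n (K n) @[n --> \oo] --> (1 : R).
  rewrite -[X in _ --> X](subr0 (1 : R)) -[X in _ --> (_ - X : R)](mulr0 (2 : R)).
  by apply: cvgB; [exact: cvg_cst | exact: cvgMl_tmp].
apply: (squeeze_cvgr _ lower_cvg1 (cvg_cst (1 : R))); near=> n.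
rewrite kout_prob_le1 andbT; apply: kout_prob_large_cmax_ge => //.
- by near: n.
- by near: n.
- by rewrite truncn_le mulr_ge0 ?ler0n ?ltW.
- by near: n.
- by near: n; apply: (cvgr_le 0 t_cvg0); lra.
Unshelve. all: by end_near.
Qed.
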